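(* Let $r\ge 2$, $d\ge 1$ be integers and $n=(r-1)d+1$. Let $F_1,\ldots,F_n\subset\mathbb{R}^d$ be pairwise disjoint sets, each of cardinality $r$, such that the coordinates of all points of $F_1\cup\cdots\cup F_n$ are algebraically independent, and let $M\subset[n]$. Then there is a colourful partition $A_1,\ldots,A_r$ of $F_1\cup\cdots\cup F_n$ (so $|F_i\cap A_j|=1$; write $F_i\cap A_j=\{x_{i,j}\}$), a point $z\in\mathbb{R}^d$ and real numbers $\alpha_1,\ldots,\alpha_n$ such that \[ z=\sum_{i=1}^n\alpha_i\,x_{i,j}\quad\text{and}\quad \sum_{i=1}^n\alpha_i=1\qquad\text{for all } j\in[r], \] and either ($\alpha_i>0$ for all $i\in M$ and $\alpha_i<0$ for all $i\in[n]\setminus M$) or ($\alpha_i<0$ for all $i\in M$ and $\alpha_i>0$ for all $i\in[n]\setminus M$). In particular the coefficient of $x_{i,j}$ in the affine combination for $A_j$ is $\alpha_i$, independent of $j$.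
   Context: $[n]=\{1,\ldots,n\}$. The sets $F_i$ are regarded as colour classes; a colourful partition of them into $r$ sets is a partition $A_1,\ldots,A_r$ of $F_1\cup\cdots\cup F_n$ with $|F_i\cap A_j|=1$ for all $i\in[n]$, $j\in[r]$. *)

From Stdlib Require Import Reals ZArith.
From mathcomp Require Import all_boot all_fingroup.
Set Implicit Arguments. Unset Strict Implicit. Unset Printing Implicit Defensive.

Definition rsum (I : finType) (F : I -> R) : R := foldr (fun i acc => Rplus (F i) acc) R0 (enum I).
Definition rprod (I : finType) (F : I -> R) : R := foldr (fun i acc => Rmult (F i) acc) R1 (enum I).

(* A polynomial with integer coefficients in the variables indexed by the
   finite type I, given as a list of (coefficient, exponent vector) terms. *)
Definition mpolyZ (I : finType) := seq (Z * {ffun I -> nat}).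

Definition mpeval (I : finType) (P : mpolyZ I) (x : I -> R) : R :=
  foldr (fun (m : Z * {ffun I -> nat}) acc => Rplus (Rmult (IZR m.1) (rprod (fun i : I => pow (x i) (m.2 i)))) acc) R0 P.

Definition mpoly_nonzero (I : finType) (P : mpolyZ I) : Prop :=
  P <> [::] /\ uniq (map snd P) /\ List.Forall (fun m => m.1 <> 0%Z) P.

(* The family x of reals is algebraically independent (over Q, equivalently
   over Z): no nonzero integer polynomial vanishes at x. *)
Definition alg_indep (I : finType) (x : I -> R) : Prop :=
  forall P : mpolyZ I, mpoly_nonzero P -> mpeval P x <> R0.

From Stdlib Require Import Reals ZArith.
From mathcomp Require Import all_boot all_fingroup all_order all_algebra.
From mathcomp Require Import all_classical all_reals all_analysis Rstruct.
From mathcomp Require Import ring lra ssrZ.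
(* Stack the differences x_{i,j} - x_{i,r} (j < r) of one colourful assignment of class i into
   a vector v_i of R^((r-1)d); coefficients alpha with sum_i alpha_i v_i = 0 are exactly those
   making all the affine combinations sum_i alpha_i x_{i,j} equal. Averaging v_i over the r!
   assignments of class i gives 0, so the colourful Caratheodory theorem, applied in dimension
   (r-1)d to the n = (r-1)d + 1 classes of signed vectors eps_i v_i (eps_i = 1 on M, -1 off M),
   yields assignments and a dependence with weakly prescribed signs. Algebraic independence makes
   certain determinants nonzero: any n - 1 of the v_i are independent, so no coefficient
   vanishes, and the v_i bordered by a column of ones are independent, so the total weight does
   not vanish and can be normalised to 1. *)

Set Implicit Arguments. Unset Strict Implicit. Unset Printing Implicit Defensive.
Import Order.TTheory GRing.Theory Num.Theory numFieldNormedType.Exports.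

Section IntegerPolynomialFunctions.
Variable I : finType.
Local Open Scope ring_scope.

Lemma rsumE (F : I -> R) : rsum F = \sum_i F i.
Proof.
rewrite /rsum -big_enum /=.
by elim: (enum I) => [|a l IH]; rewrite ?big_nil ?big_cons //= IH.
Qed.

Lemma rprodE (F : I -> R) : rprod F = \prod_i F i.
Proof.
rewrite /rprod -big_enum /=.
by elim: (enum I) => [|a l IH]; rewrite ?big_nil ?big_cons //= IH.
Qed.

Definition monomial (e : {ffun I -> nat}) (x : I -> R) : R := \prod_i x i ^+ e i.

Lemma mpevalE (P : mpolyZ I) x :
  mpeval P x = \sum_(t <- P) IZR t.1 * monomial t.2 x.
Proof.
elim: P => [|t P IH]; rewrite ?big_nil ?big_cons //= IH rprodE.
by congr (_ * _ + _); apply: eq_bigr => i _; rewrite -RpowE.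
Qed.

Definition intpoly_fun (f : (I -> R) -> R) := exists P : mpolyZ I, mpeval P =1 f.

Lemma intpoly_fun_ext f g : intpoly_fun f -> f =1 g -> intpoly_fun g.
Proof. by move=> [P HP] fg; exists P => x; rewrite HP. Qed.

Lemma intpoly_fun_cst (z : Z) : intpoly_fun (fun _ => IZR z).
Proof.
exists [:: (z, [ffun=> 0%N])] => x.
rewrite mpevalE big_seq1 /monomial big1 ?mulr1 // => i _.
by rewrite ffunE expr0.
Qed.

Lemma intpoly_fun_var (i : I) : intpoly_fun (fun x => x i).
Proof.
exists [:: (Zpos xH, [ffun j => nat_of_bool (j == i)])] => x.
rewrite mpevalE big_seq1 mul1r /monomial (bigD1 i) //= ffunE eqxx expr1.
by rewrite big1 ?mulr1 // => j /negbTE ji; rewrite ffunE ji.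
Qed.

Lemma intpoly_funD f g :
  intpoly_fun f -> intpoly_fun g -> intpoly_fun (fun x => f x + g x).
Proof.
move=> [P HP] [Q HQ]; exists (P ++ Q) => x.
by rewrite mpevalE big_cat /= -!mpevalE HP HQ.
Qed.

Lemma monomialD (e1 e2 : {ffun I -> nat}) x :
  monomial [ffun i => (e1 i + e2 i)%N] x = monomial e1 x * monomial e2 x.
Proof.
by rewrite /monomial -big_split; apply: eq_bigr => i _; rewrite ffunE exprD.
Qed.

Lemma intpoly_funM f g :
  intpoly_fun f -> intpoly_fun g -> intpoly_fun (fun x => f x * g x).
Proof.
move=> [P HP] [Q HQ].
exists [seq (Z.mul a.1 b.1, [ffun i => (a.2 i + b.2 i)%N])
       | a : Z * {ffun I -> nat} <- P, b : Z * {ffun I -> nat} <- Q] => x.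
rewrite -HP -HQ !mpevalE big_allpairs_dep mulr_suml; apply: eq_bigr => a _.
rewrite mulr_sumr; apply: eq_bigr => b _ /=.
by rewrite monomialD mult_IZR mulrACA.
Qed.

Lemma intpoly_funB f g :
  intpoly_fun f -> intpoly_fun g -> intpoly_fun (fun x => f x - g x).
Proof.
move=> Hf Hg.
have HNg := intpoly_funM (intpoly_fun_cst (Zneg xH)) Hg.
by apply: intpoly_fun_ext (intpoly_funD Hf HNg) _ => x; rewrite mulN1r.
Qed.

Lemma intpoly_fun_sum (J : Type) (s : seq J) (F : J -> (I -> R) -> R) :
  (forall j, intpoly_fun (F j)) -> intpoly_fun (fun x => \sum_(j <- s) F j x).
Proof.
move=> HF; elim: s => [|j s IH].
  by apply: intpoly_fun_ext (intpoly_fun_cst Z0) _ => x; rewrite big_nil.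
by apply: intpoly_fun_ext (intpoly_funD (HF j) IH) _ => x; rewrite big_cons.
Qed.

Lemma intpoly_fun_prod (J : Type) (s : seq J) (F : J -> (I -> R) -> R) :
  (forall j, intpoly_fun (F j)) -> intpoly_fun (fun x => \prod_(j <- s) F j x).
Proof.
move=> HF; elim: s => [|j s IH].
  by apply: intpoly_fun_ext (intpoly_fun_cst (Zpos xH)) _ => x; rewrite big_nil.
by apply: intpoly_fun_ext (intpoly_funM (HF j) IH) _ => x; rewrite big_cons.
Qed.

Lemma intpoly_fun_det q (F : (I -> R) -> 'M[R]_q) :
  (forall a b, intpoly_fun (fun x => F x a b)) -> intpoly_fun (fun x => \det (F x)).
Proof.
move=> HF; apply: intpoly_fun_sum => s; apply: intpoly_funM.
  apply: intpoly_fun_ext (intpoly_fun_cst (if odd_perm s then Zneg xH else Zpos xH)) _.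
  by move=> x; case: (odd_perm s); rewrite ?expr1 ?expr0.
by apply: intpoly_fun_prod => i; apply: HF.
Qed.

(* [alg_indep] only excludes polynomials in normal form, hence this normalisation. *)
Definition coefZ (P : mpolyZ I) (e : {ffun I -> nat}) : Z := \sum_(t <- P | t.2 == e) t.1.

Definition normalize (P : mpolyZ I) : mpolyZ I :=
  [seq (coefZ P e, e) | e <- undup (map snd P) & coefZ P e != Z0].

Lemma coefZE P e : IZR (coefZ P e) = \sum_(t <- P | t.2 == e) IZR t.1.
Proof. exact: (big_morph IZR plus_IZR). Qed.

Lemma mpeval_normalize P x : mpeval (normalize P) x = mpeval P x.
Proof.
rewrite !mpevalE /normalize big_map big_filter.
have -> : \sum_(t <- P) IZR t.1 * monomial t.2 x =
    \sum_(e <- undup (map snd P)) \sum_(t <- P | t.2 == e) IZR t.1 * monomial t.2 x.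
  rewrite [RHS](exchange_big_dep predT) //= big_seq [RHS]big_seq.
  apply: eq_bigr => t tP.
  rewrite -big_filter (@eq_filter _ _ (pred1 t.2)) => [|e]; last exact: eq_sym.
  by rewrite filter_pred1_uniq ?undup_uniq ?big_seq1 // mem_undup map_f.
rewrite big_mkcond /=; apply: eq_bigr => e _.
rewrite (eq_bigr (fun t => IZR t.1 * monomial e x)) => [|t /eqP -> //].
rewrite -big_distrl -coefZE.
by case: eqP => [-> |] //=; rewrite mul0r.
Qed.

Lemma normalize_nonzero P : normalize P = [::] \/ mpoly_nonzero (normalize P).
Proof.
case E: (normalize P) => [|t Q]; [by left | right; rewrite -E].
split; first by rewrite E.
split; first by rewrite /normalize -map_comp map_id filter_uniq ?undup_uniq.
apply/List.Forall_forall => m /List.in_map_iff [e [<- /List.filter_In [_ He]]] /=.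
by move=> m0; rewrite m0 eqxx in He.
Qed.

Lemma intpoly_fun_neq0 f y x :
  intpoly_fun f -> f y <> 0 -> alg_indep x -> f x <> 0.
Proof.
move=> [P HP] fy Hx; rewrite -HP -mpeval_normalize.
case: (normalize_nonzero P) => [E | NZ]; last exact: Hx.
by move: fy; rewrite -HP -mpeval_normalize E.
Qed.

Lemma alg_indep_det_neq0 q (F : (I -> R) -> 'M[R]_q) y x :
  (forall a b, intpoly_fun (fun x => F x a b)) ->
  \det (F y) != 0 -> alg_indep x -> \det (F x) != 0.
Proof.
move=> HF /eqP Fy Hx; apply/eqP.
exact: intpoly_fun_neq0 (intpoly_fun_det HF) Fy Hx.
Qed.

End IntegerPolynomialFunctions.

Section ColourfulCaratheodory.
Variable R : realType.
Local Open Scope ring_scope.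
Local Open Scope classical_set_scope.

Definition dot n (u v : 'rV[R]_n) := \sum_k u 0 k * v 0 k.

Lemma dot_ge0 n (u : 'rV[R]_n) : 0 <= dot u u.
Proof. by apply: sumr_ge0 => k _; rewrite -expr2 sqr_ge0. Qed.

Lemma dot_eq0 n (u : 'rV[R]_n) : (dot u u == 0) = (u == 0).
Proof.
apply/idP/eqP => [/eqP/psumr_eq0P u0 | ->]; last by rewrite /dot big1 // => k; rewrite mxE mul0r.
apply/rowP => k; rewrite mxE; apply/eqP.
have /eqP : u 0 k * u 0 k = 0 by apply: u0 => // j _; rewrite -expr2 sqr_ge0.
by rewrite mulf_eq0 orbb.
Qed.

Lemma dot_sumZr n (K : finType) (p : 'rV[R]_n) (mu : K -> R) (w : K -> 'rV[R]_n) :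
  dot p (\sum_c mu c *: w c) = \sum_c mu c * dot p (w c).
Proof.
rewrite /dot; under eq_bigr do rewrite summxE mulr_sumr.
rewrite exchange_big /=; apply: eq_bigr => c _; rewrite mulr_sumr.
by apply: eq_bigr => k _; rewrite mxE mulrCA.
Qed.

Lemma dot_mulmx n m (p : 'rV[R]_n) (l : 'rV[R]_m) (S : 'M[R]_(m, n)) :
  dot p (l *m S) = \sum_i l 0 i * dot p (row i S).
Proof. by rewrite mulmx_sum_row dot_sumZr. Qed.

Lemma dot_segment n (p w : 'rV[R]_n) t :
  dot (p + t *: w) (p + t *: w) = dot p p + t * (2 * dot p w) + t ^+ 2 * dot w w.
Proof.
rewrite /dot !mulr_sumr -!big_split /=; apply: eq_bigr => k _; rewrite !mxE; ring.
Qed.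

(* The step [t = a / (a + b)] gives [t * b <= a], hence the decrease [t * a]. *)
Lemma segment_norm_lt n (p q : 'rV[R]_n) : dot p q < dot p p ->
  exists2 t, 0 < t <= 1 & dot (p + t *: (q - p)) (p + t *: (q - p)) < dot p p.
Proof.
move=> pq.
have pqp : dot p (q - p) = dot p q - dot p p.
  by rewrite /dot -sumrB; apply: eq_bigr => k _; rewrite !mxE mulrBr.
set a := dot p p - dot p q; set b := dot (q - p) (q - p).
have a0 : 0 < a by rewrite subr_gt0.
have b0 : 0 <= b by apply: dot_ge0.
have ab0 : 0 < a + b by rewrite ltr_wpDr.
pose t := a / (a + b).
have t0 : 0 < t by rewrite divr_gt0.
have tab : t * (a + b) = a by rewrite divfK // gt_eqF.
exists t; first by rewrite t0 /= ler_pdivrMr // mul1r lerDl.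
have tb : t * b <= a by rewrite -[leRHS]tab mulrDr lerDr mulr_ge0 // ltW.
have : t ^+ 2 * b <= t * a by rewrite expr2 -mulrA ler_wpM2l // ltW.
have : 0 < t * a by rewrite mulr_gt0.
rewrite dot_segment pqp -opprB -/a -/b; lra.
Qed.

Definition convex_weights m (l : 'rV[R]_m) := (forall i, 0 <= l 0 i) /\ \sum_i l 0 i = 1.

Lemma convex_weights_delta m (j : 'I_m) : convex_weights (delta_mx 0 j).
Proof.
split => [i|]; first by rewrite mxE ler0n.
rewrite (bigD1 j) //= big1 ?mxE ?eqxx ?addr0 // => i /negbTE.
by rewrite mxE => ->.
Qed.

Lemma convex_weights_segment m (l1 l2 : 'rV[R]_m) t :
  convex_weights l1 -> convex_weights l2 -> 0 <= t <= 1 ->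
  convex_weights ((1 - t) *: l1 + t *: l2).
Proof.
move=> [l1_ge0 l1_1] [l2_ge0 l2_1] /andP[t0 t1]; split => [i|].
  by rewrite !mxE addr_ge0 // mulr_ge0 // subr_ge0.
under eq_bigr do rewrite !mxE.
by rewrite big_split /= -!mulr_sumr l1_1 l2_1 !mulr1 subrK.
Qed.

Lemma mulmx_segment m n (l : 'rV[R]_m) (S : 'M[R]_(m, n)) j t :
  ((1 - t) *: l + t *: delta_mx 0 j) *m S = l *m S + t *: (row j S - l *m S).
Proof. by rewrite mulmxDl -!scalemxAl -rowE scalerBl scale1r scalerBr addrAC addrA. Qed.

Lemma continuous_sum (T : topologicalType) (I : finType) (F : I -> T -> R) :
  (forall i, continuous (F i)) -> continuous (fun x => \sum_i F i x).
Proof. by move=> Fc; apply: (@continuous_big _ _ +%R 0 predT add_continuous) => i _; apply: Fc. Qed.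

Lemma compact_convex_weights m : compact [set l : 'rV[R]_m | convex_weights l].
Proof.
apply: (@subclosed_compact _ _ [set l : 'rV[R]_m | forall i, `[0, 1]%classic (l 0 i)]).
- have -> : [set l : 'rV[R]_m | convex_weights l] =
      (\bigcap_i [set l : 'rV[R]_m | 0 <= l 0 i]) `&`
      ((fun l : 'rV[R]_m => \sum_i l 0 i) @^-1` [set 1]).
    apply/seteqP; split => l [l_ge0 l_1]; split => // i; first by move=> _; apply: l_ge0.
    exact: l_ge0.
  apply: closedI.
    apply: closed_bigI => i _.
    apply: (@preimage_closed _ _ (fun l : 'rV[R]_m => l 0 i) [set x | 0 <= x]).
      by move=> l _; apply: coord_continuous.
    exact: closed_ge.
  apply: preimage_closed; last exact: closed_eq.
  by move=> l _; apply: continuous_sum => i; apply: coord_continuous.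
- by apply: (@rV_compact _ _ (fun=> `[(0 : R), 1]%classic)) => i; apply: segment_compact.
- move=> l [l_ge0 l_1] i /=; rewrite in_itv /= l_ge0 /= -l_1.
  by rewrite (bigD1 i) //= lerDl sumr_ge0.
Qed.

Definition min_norm_weights m n (S : 'M[R]_(m, n)) l := convex_weights l /\
  forall l', convex_weights l' -> dot (l *m S) (l *m S) <= dot (l' *m S) (l' *m S).

Lemma exists_min_norm_weights m n (S : 'M[R]_(m.+1, n)) : exists l, min_norm_weights S l.
Proof.
have W0 : [set l : 'rV[R]_m.+1 | convex_weights l] !=set0.
  by exists (delta_mx 0 ord0); apply: convex_weights_delta.
have entry_cont k : continuous (fun l : 'rV[R]_m.+1 => (l *m S) 0 k).
  have -> : (fun l : 'rV[R]_m.+1 => (l *m S) 0 k) = fun l => \sum_i l 0 i * S i k.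
    by apply: funext => l; rewrite mxE.
  apply: continuous_sum => i l.
  by apply: continuousM; [apply: coord_continuous | apply: cst_continuous].
have norm_cont : continuous (fun l : 'rV[R]_m.+1 => dot (l *m S) (l *m S)).
  apply: continuous_sum => k l.
  by apply: continuousM; apply: entry_cont.
have [l lW lmin] := EVT_min_rV W0 (@compact_convex_weights _) (continuous_subspaceT norm_cont).
exists l; split; first by rewrite inE in lW.
by move=> l' l'W; apply: lmin; rewrite inE.
Qed.

Section MinNorm.
Variables (m n : nat) (S : 'M[R]_(m, n)) (l : 'rV[R]_m).
Hypothesis lmin : min_norm_weights S l.
Let p := l *m S.

Lemma min_norm_le_dot j : dot p p <= dot p (row j S).
Proof.
rewrite leNgt; apply/negP => /segment_norm_lt [t /andP[t0 t1] lt_p].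
have t01 : 0 <= t <= 1 by rewrite ltW.
have := lmin.2 _ (convex_weights_segment lmin.1 (convex_weights_delta j) t01).
by rewrite mulmx_segment -/p leNgt lt_p.
Qed.

Lemma min_norm_dot_support j : 0 < l 0 j -> dot p (row j S) = dot p p.
Proof.
have terms_ge0 i : 0 <= l 0 i * (dot p (row i S) - dot p p).
  by rewrite mulr_ge0 ?subr_ge0 ?min_norm_le_dot //; case: lmin => -[].
have : \sum_i l 0 i * (dot p (row i S) - dot p p) = 0.
  under eq_bigr do rewrite mulrBr.
  by rewrite sumrB -dot_mulmx -mulr_suml lmin.1.2 mul1r subrr.
move/psumr_eq0P => /(_ (fun i _ => terms_ge0 i)) /(_ j isT) /eqP.
by rewrite mulf_eq0 subr_eq0 => /orP[/eqP-> | /eqP//]; rewrite ltxx.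
Qed.

End MinNorm.


Lemma det_eq0_of_mulmx n (A : 'M[R]_n) (v : 'cV[R]_n) : A *m v = 0 -> v != 0 -> \det A = 0.
Proof.
move=> Av; apply: contraNeq => detA.
have uA : A \in unitmx by rewrite unitmxE unitfE.
by rewrite -(mulKmx uA v) Av mulmx0.
Qed.

Lemma hyperplane_affine_dependent n (S : 'M[R]_(n.+1, n)) (p : 'rV[R]_n) c :
  p != 0 -> (forall j, dot p (row j S) = c) ->
  exists2 u : 'rV[R]_n.+1, u != 0 & \sum_j u 0 j = 0 /\ u *m S = 0.
Proof.
move=> p0 Sp.
pose A : 'M[R]_(n.+1, 1 + n) := row_mx (const_mx 1) S.
pose v : 'cV[R]_(1 + n) := col_mx (const_mx (- c)) p^T.
have Av : A *m v = 0.
  rewrite mul_row_col; apply/colP => j; rewrite !mxE big_ord1 !mxE.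
  apply/eqP; rewrite -(Sp j) /dot mul1r addrC subr_eq0.
  by apply/eqP/eq_bigr => k _; rewrite !mxE mulrC.
have v0 : v != 0.
  apply: contraNneq p0 => v0; apply/eqP/rowP => k.
  by have := congr1 (fun w : 'cV[R]_(1 + n) => w (rshift 1 k) 0) v0; rewrite col_mxEd !mxE.
have /eqP/det0P[u u0 uA] := det_eq0_of_mulmx Av v0.
have /eqP : u *m A = 0 := uA.
rewrite mul_mx_row row_mx_eq0 => /andP[/eqP u1 /eqP uS].
exists u => //; split => //.
have := congr1 (fun w : 'rV[R]_1 => w 0 0) u1.
rewrite /= !mxE => u1s; rewrite -[RHS]u1s.
by apply: eq_bigr => j _; rewrite mxE mulr1.
Qed.

(* Move along [-u] until the first weight vanishes: [t] is the least ratio [l i / u i]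
   over the [i] with [u i > 0]. *)
Lemma convex_weights_vanish m (l u : 'rV[R]_m) :
  convex_weights l -> u != 0 -> \sum_j u 0 j = 0 ->
  exists t, convex_weights (l - t *: u) /\ exists i, (l - t *: u) 0 i = 0.
Proof.
move=> [l_ge0 l_1] u0 u_sum.
have [j uj] : exists j, 0 < u 0 j.
  apply/not_existsP => u_le0; move: u0; apply/negP; rewrite negbK.
  have Nu_ge0 i : 0 <= - u 0 i by rewrite oppr_ge0 leNgt; apply/negP/u_le0.
  have : \sum_i - u 0 i = 0 by rewrite sumrN u_sum oppr0.
  move/psumr_eq0P => /(_ (fun i _ => Nu_ge0 i)) Nu0.
  by apply/eqP/rowP => i; rewrite mxE; apply/eqP; rewrite -oppr_eq0 Nu0.
have [i ui imin] := @arg_minP _ _ _ j (fun i => 0 < u 0 i) (fun i => l 0 i / u 0 i) uj.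
exists (l 0 i / u 0 i); split; last by exists i; rewrite !mxE divfK ?subrr // gt_eqF.
split => [k|].
  rewrite !mxE subr_ge0; have [uk|uk] := ltrP 0 (u 0 k).
    by rewrite -ler_pdivlMr // imin.
  by rewrite (le_trans _ (l_ge0 k)) // mulr_ge0_le0 // divr_ge0 // ltW.
under eq_bigr do rewrite !mxE.
by rewrite sumrB -mulr_sumr u_sum mulr0 subr0.
Qed.

Lemma min_norm_vanishing_weight n (S : 'M[R]_(n.+1, n)) l :
  min_norm_weights S l -> l *m S != 0 ->
  exists l1, [/\ convex_weights l1, l1 *m S = l *m S & exists i, l1 0 i = 0].
Proof.
move=> lmin p0.
have [[i li] | l_pos] := pselect (exists i, l 0 i = 0).
  by exists l; split => //; [case: lmin | exists i].
have l_gt0 j : 0 < l 0 j.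
  by rewrite lt_def lmin.1.1 andbT; apply/eqP => lj; apply: l_pos; exists j.
have [u u0 [u_sum uS]] :=
  hyperplane_affine_dependent p0 (fun j => min_norm_dot_support lmin (l_gt0 j)).
have [t [lt_w lt_0]] := convex_weights_vanish lmin.1 u0 u_sum.
by exists (l - t *: u); split => //; rewrite mulmxBl -scalemxAl uS scaler0 subr0.
Qed.

Lemma conv0_dot_le0 n (K : finType) (w : K -> 'rV[R]_n) (mu : K -> R) (p : 'rV[R]_n) :
  (forall c, 0 <= mu c) -> \sum_c mu c = 1 -> \sum_c mu c *: w c = 0 ->
  exists c, dot p (w c) <= 0.
Proof.
move=> mu_ge0 mu_1 mu_w.
case: (pickP (fun _ : K => true)) => [c0 _ | K0]; last first.
  by move: mu_1; rewrite big_pred0 // => /esym/eqP; rewrite oner_eq0.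
have [c _ cmin] := @arg_minP _ _ _ c0 xpredT (fun c => dot p (w c)) isT.
have -> : 0 = \sum_c mu c * dot p (w c).
  by rewrite -dot_sumZr mu_w /dot big1 // => k _; rewrite mxE mulr0.
exists c; rewrite -[leLHS]mul1r -mu_1 mulr_suml; apply: ler_sum => c' _.
by rewrite ler_wpM2l // cmin.
Qed.

(* Take a colourful choice [f] whose simplex is closest to the origin. If the distance were
   positive, a vanishing weight frees a colour [i], and swapping in a point of colour [i] on the
   origin's side of the supporting hyperplane brings the simplex closer. *)
Theorem colourful_caratheodory n (K : finType) (C : 'I_n.+1 -> K -> 'rV[R]_n) :
  (forall i, exists mu : K -> R,
     [/\ forall c, 0 <= mu c, \sum_c mu c = 1 & \sum_c mu c *: C i c = 0]) ->
  exists (f : 'I_n.+1 -> K) (l : 'rV[R]_n.+1),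
    convex_weights l /\ l *m \matrix_i C i (f i) = 0.
Proof.
move=> C0.
have [c0 _] : exists c : K, true.
  have [mu [mu_ge0 mu_1 mu_C]] := C0 ord0.
  by have [c _] := conv0_dot_le0 0 mu_ge0 mu_1 mu_C; exists c.
pose S (f : {ffun 'I_n.+1 -> K}) := \matrix_i C i (f i).
have [lw lw_min] := choice (fun f => exists_min_norm_weights (S f)).
pose V f := dot (lw f *m S f) (lw f *m S f).
have [f0 _ f0_min] := @arg_minP _ _ _ [ffun=> c0] xpredT V isT.
exists f0, (lw f0); split; first exact: (lw_min f0).1.
set p := lw f0 *m S f0; apply/eqP; apply: contraT => p0.
have [l1 [l1w l1p [i l1i]]] := min_norm_vanishing_weight (lw_min f0) p0.
have [mu [mu_ge0 mu_1 mu_C]] := C0 i.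
have [c pc] := conv0_dot_le0 p mu_ge0 mu_1 mu_C.
have pp_gt0 : 0 < dot p p by rewrite lt_def dot_eq0 p0 dot_ge0.
pose f1 := [ffun j => if j == i then c else f0 j].
have l1p1 : l1 *m S f1 = p.
  rewrite /p -l1p !mulmx_sum_row; apply: eq_bigr => j _; rewrite !rowK ffunE.
  by case: eqP => [-> | //]; rewrite l1i !scale0r.
have [t /andP[t0 t1] lt_p] := segment_norm_lt (le_lt_trans pc pp_gt0).
have t01 : 0 <= t <= 1 by rewrite ltW.
have := (lw_min f1).2 _ (convex_weights_segment l1w (convex_weights_delta i) t01).
rewrite mulmx_segment l1p1 rowK ffunE eqxx => /le_lt_trans /(_ lt_p).
by rewrite ltNge f0_min.
Qed.

End ColourfulCaratheodory.

Section KernelSupport.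
Variable F : fieldType.
Local Open Scope ring_scope.

Lemma kernel_coord_neq0 m (W : 'M[F]_(m.+1, m)) (g : 'rV[F]_m.+1) k :
  \det (row' k W) != 0 -> g *m W = 0 -> g != 0 -> g 0 k != 0.
Proof.
move=> Wk gW; apply: contraNneq => gk.
have g'W : col' k g *m row' k W = 0.
  rewrite -gW; apply/rowP => t; rewrite !mxE (bigD1_ord k) //= gk mul0r add0r.
  by apply: eq_bigr => u _; rewrite !mxE.
have /eqP g'0 : col' k g == 0.
  by apply: contraTT Wk => g'0; rewrite negbK; apply/det0P; exists (col' k g).
apply/eqP/rowP => i; rewrite mxE; case: (unliftP k i) => [u ->|->] //.
by have := congr1 (fun v : 'rV[F]_m => v 0 u) g'0; rewrite !mxE.
Qed.

Definition bordered_mx m (W : 'M[F]_(1 + m, m)) : 'M[F]_(1 + m) := row_mx (const_mx 1) W.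

Lemma kernel_sum_neq0 m (W : 'M[F]_(1 + m, m)) (g : 'rV[F]_(1 + m)) :
  \det (bordered_mx W) != 0 -> g *m W = 0 -> g != 0 -> \sum_i g 0 i != 0.
Proof.
move=> W1 gW g0; apply: contraNneq W1 => g_sum; apply/det0P; exists g => //.
rewrite /bordered_mx mul_mx_row gW; apply/rowP => t; rewrite !mxE.
case: (splitP t) => [j _ | j _]; rewrite !mxE //.
by rewrite -[RHS]g_sum; apply: eq_bigr => i _; rewrite mxE mulr1.
Qed.

End KernelSupport.

Section ColourfulAffineCombination.
Local Open Scope ring_scope.
Variables (r' d : nat).
Local Notation r := r'.+1.
Local Notation m := (r' * d)%N.
Local Notation n := m.+1.
Local Notation coords := ('I_n * 'I_r * 'I_d)%type.

Definition diffs (y : coords -> R) (i : 'I_n) (s : {perm 'I_r}) : 'M[R]_(r', d) :=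
  \matrix_(j, c) (y (i, s (lift ord_max j), c) - y (i, s ord_max, c)).

Definition diff_mx (y : coords -> R) (sg : 'I_n -> {perm 'I_r}) : 'M[R]_(n, m) :=
  \matrix_i mxvec (diffs y i (sg i)).

Lemma diff_mxE y sg i j c :
  diff_mx y sg i (mxvec_index j c) = y (i, sg i (lift ord_max j), c) - y (i, sg i ord_max, c).
Proof. by rewrite mxE mxvecE mxE. Qed.

Lemma intpoly_fun_diff_mx sg i t : intpoly_fun (fun y => diff_mx y sg i t).
Proof.
case: (mxvec_indexP t) => j c.
apply: intpoly_fun_ext (intpoly_funB (intpoly_fun_var _) (intpoly_fun_var _)) _ => y.
by rewrite diff_mxE.
Qed.

Lemma diff_mx_surj sg (B : 'M[R]_(n, m)) : exists y, diff_mx y sg = B.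
Proof.
exists (fun x : coords => let: (i, a, c) := x in
  if unlift ord_max ((sg i)^-1%g a) is Some j then B i (mxvec_index j c) else 0).
apply/matrixP => i t; case: (mxvec_indexP t) => j c.
by rewrite diff_mxE !permK liftK unlift_none subr0.
Qed.

Lemma sum_diffs y i : \sum_s diffs y i s = 0.
Proof.
apply/matrixP => j c; rewrite summxE mxE /diffs; under eq_bigr do rewrite mxE.
rewrite sumrB (reindex_inj (mulgI (tperm (lift ord_max j) ord_max))) /=.
by under eq_bigr do rewrite permM tpermL; rewrite subrr.
Qed.

Lemma det_row'_diff_mx_neq0 (X : coords -> R) sg k :
  alg_indep X -> \det (row' k (diff_mx X sg)) != 0.
Proof.
have [y0 y0B] := diff_mx_surj sg (\matrix_(i, t) (i == lift k t)%:R).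
apply: (@alg_indep_det_neq0 _ _ (fun y => row' k (diff_mx y sg)) y0).
  move=> a b; apply: intpoly_fun_ext (intpoly_fun_diff_mx sg (lift k a) b) _ => y.
  by rewrite [RHS]mxE.
have -> : row' k (diff_mx y0 sg) = 1%:M.
  by apply/matrixP => a b; rewrite y0B !mxE (inj_eq lift_inj).
by rewrite det1 oner_eq0.
Qed.

Lemma det_bordered_diff_mx_neq0 (X : coords -> R) sg :
  alg_indep X -> \det (bordered_mx (diff_mx X sg)) != 0.
Proof.
have [y0 y0B] := diff_mx_surj sg (col_mx 0 1%:M : 'M[R]_(1 + m, m)).
apply: (@alg_indep_det_neq0 _ _ (fun y => bordered_mx (diff_mx y sg)) y0).
  move=> a b; case E: (fintype.split b) => [j|j].
    by apply: intpoly_fun_ext (intpoly_fun_cst coords (Zpos xH)) _ => y; rewrite mxE E mxE.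
  by apply: intpoly_fun_ext (intpoly_fun_diff_mx sg a j) _ => y; rewrite [RHS]mxE E.
rewrite y0B /bordered_mx -[const_mx 1](@col_mx_const _ 1 m 1 1) -block_mxEh.
by rewrite det_lblock det1 det_mx11 mxE mulr1 oner_eq0.
Qed.

Lemma diff_mx_kernel y sg (g : 'rV[R]_n) j c : g *m diff_mx y sg = 0 ->
  \sum_i g 0 i * y (i, sg i j, c) = \sum_i g 0 i * y (i, sg i ord_max, c).
Proof.
case: (unliftP ord_max j) => [j' ->|->] // gW.
apply/eqP; rewrite -subr_eq0 -sumrB; apply/eqP.
have := congr1 (fun v : 'rV[R]_m => v 0 (mxvec_index j' c)) gW; rewrite !mxE => gWjc.
by rewrite -[RHS]gWjc; apply: eq_bigr => i _; rewrite diff_mxE mulrBr.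
Qed.

Lemma exists_signed_kernel_vector (X : coords -> R) (eps : 'I_n -> R) :
  alg_indep X -> (forall i, eps i != 0) ->
  exists sg (g : 'rV[R]_n),
    [/\ g *m diff_mx X sg = 0, forall i, 0 < eps i * g 0 i & \sum_i g 0 i != 0].
Proof.
move=> Xind eps0.
pose C i s := eps i *: mxvec (diffs X i s).
have C0 i : exists mu : {perm 'I_r} -> R,
    [/\ forall s, 0 <= mu s, \sum_s mu s = 1 & \sum_s mu s *: C i s = 0].
  exists (fun=> #|{perm 'I_r}|%:R^-1); split.
  - by move=> _; rewrite invr_ge0 ler0n.
  - rewrite sumr_const -[#|xpredT|]/#|{perm 'I_r}| -(mulr_natr (#|{perm 'I_r}|%:R^-1)).
    rewrite mulVf // pnatr_eq0 -lt0n.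
    by apply/card_gt0P; exists 1%g.
  - by rewrite -scaler_sumr /C -scaler_sumr -linear_sum sum_diffs linear0 !scaler0.
have [sg [l [[l_ge0 l_1] lC]]] := colourful_caratheodory C0.
pose g := \row_i (eps i * l 0 i).
have gW : g *m diff_mx X sg = 0.
  rewrite -lC !mulmx_sum_row; apply: eq_bigr => i _.
  by rewrite !rowK mxE scalerA mulrC.
have g0 : g != 0.
  apply/eqP => g0; move: l_1; rewrite big1 => [/esym/eqP | i _]; first by rewrite oner_eq0.
  have /eqP := congr1 (fun v : 'rV[R]_n => v 0 i) g0.
  by rewrite !mxE mulf_eq0 (negbTE (eps0 i)) => /eqP.
exists sg, g; split => // [i|].
  have := kernel_coord_neq0 (det_row'_diff_mx_neq0 sg i Xind) gW g0.
  rewrite !mxE mulrA mulf_eq0 negb_or => /andP[_ li].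
  apply: mulr_gt0; last by rewrite lt_def li l_ge0.
  by rewrite -expr2 exprn_even_gt0 //= eps0 orbT.
exact: kernel_sum_neq0 (det_bordered_diff_mx_neq0 sg Xind) gW g0.
Qed.

Lemma colourful_signed_affine_combination (X : coords -> R) (eps : 'I_n -> R) :
  alg_indep X -> (forall i, eps i != 0) ->
  exists (sg : 'I_n -> {perm 'I_r}) (alpha : 'I_n -> R),
    [/\ forall j c, \sum_i alpha i * X (i, sg i j, c) = \sum_i alpha i * X (i, sg i ord_max, c),
        \sum_i alpha i = 1
      & (forall i, 0 < eps i * alpha i) \/ (forall i, eps i * alpha i < 0)].
Proof.
move=> Xind eps0.
have [sg [g [gW g_sign g_sum]]] := exists_signed_kernel_vector Xind eps0.
set S := \sum_i g 0 i in g_sum.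
exists sg, (fun i => g 0 i / S); split.
- move=> j c.
  have scale k : \sum_i g 0 i / S * X (i, sg i k, c) = (\sum_i g 0 i * X (i, sg i k, c)) / S.
    by rewrite mulr_suml; apply: eq_bigr => i _; rewrite mulrAC.
  by rewrite !scale (diff_mx_kernel _ _ gW).
- by rewrite -mulr_suml divff.
case: (ltgtP S 0) => [S_lt0|S_gt0|S0]; last by rewrite S0 eqxx in g_sum.
  by right => i; rewrite mulrA pmulr_rlt0 ?g_sign // invr_lt0.
by left => i; rewrite mulrA divr_gt0.
Qed.

End ColourfulAffineCombination.

Unset Implicit Arguments.

Theorem mainTheorem6 (r d n : nat) (Hr : (2 <= r)%N) (Hd : (1 <= d)%N)
  (Hn : n = ((r - 1) * d + 1)%N)
  (p : 'I_n -> 'I_r -> 'I_d -> R)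
  (Hdisj : forall (i i' : 'I_n) (k k' : 'I_r), p i k = p i' k' -> i = i' /\ k = k')
  (Hind : alg_indep (fun t : 'I_n * 'I_r * 'I_d => p t.1.1 t.1.2 t.2))
  (M : {set 'I_n}) :
  exists (sigma : 'I_n -> {perm 'I_r}) (z : 'I_d -> R) (alpha : 'I_n -> R),
    (forall (j : 'I_r) (c : 'I_d),
        z c = rsum (fun i : 'I_n => Rmult (alpha i) (p i (sigma i j) c))) /\
    rsum alpha = R1 /\
    ((forall i, i \in M -> Rlt 0 (alpha i)) /\ (forall i, i \notin M -> Rlt (alpha i) 0)
     \/
     (forall i, i \in M -> Rlt (alpha i) 0) /\ (forall i, i \notin M -> Rlt 0 (alpha i))).
Proof.
case: r Hr Hn p Hdisj Hind => [//|r'] _ Hn p _ Hind.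
have n_eq : n = (r' * d).+1 by rewrite Hn subn1 addn1.
clear Hn; subst n.
pose eps i : R := (if i \in M then 1 else -1)%R.
have eps0 i : (eps i != 0)%R by rewrite /eps; case: (i \in M); rewrite ?oppr_eq0 oner_eq0.
have [sg [alpha [alpha_aff alpha_1 alpha_sign]]] :=
  colourful_signed_affine_combination Hind eps0.
exists sg, (fun c => \sum_i alpha i * p i (sg i ord_max) c)%R, alpha; split.
  by move=> j c; rewrite rsumE; exact: esym (alpha_aff j c).
split; first by rewrite rsumE.
have eps_alpha i : (eps i * alpha i = if i \in M then alpha i else - alpha i)%R.
  by rewrite /eps; case: (i \in M); rewrite ?mul1r ?mulN1r.
by case: alpha_sign => alpha_sign; [left | right]; split => i Mi; apply/RltP;
  have := alpha_sign i; rewrite eps_alpha ?Mi ?(negbTE Mi) ?oppr_gt0 ?oppr_lt0.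
Qed.
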